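(* Let $0<q\leq 1$, let $A\in\mathbb{R}^{m\times n}$, let $D\in\mathbb{R}^{n\times d}$ be a frame with frame bounds $0<\mathcal{L}\leq\mathcal{U}<\infty$, fix positive integers $s<a$, and set $\rho=s/a$, $\kappa=\mathcal{U}/\mathcal{L}$. Assume that the $(D^{\dagger},q)$-RIP constants of $A$ satisfy $$\rho^{1-q/2}\left(\rho^{2/q-1}+1\right)^{q/2}\kappa^q(1+\delta_a)<1-\delta_{s+a}.$$ Let $f\in\mathbb{R}^n$ and $y=Af$. Then any solution $\hat{f}$ of $$\min_{\tilde{f}\in\mathbb{R}^n}\|D^*\tilde{f}\|_q\quad\text{subject to}\quad A\tilde{f}=y$$ satisfies $$\|\hat{f}-f\|_2\leq C_1\frac{\|D^*f-(D^*f)_{[s]}\|_q}{s^{1/q-1/2}},$$ where $C_1$ is a positive constant depending only on $\delta_a$, $\delta_{s+a}$, $\rho$, $q$, $\mathcal{L}$ and $\kappa$.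
   Context: $D\in\mathbb{R}^{n\times d}$ is a frame with frame bounds $0<\mathcal{L}\leq\mathcal{U}<\infty$ if $\mathcal{L}\|f\|_2^2\leq\|D^*f\|_2^2\leq\mathcal{U}\|f\|_2^2$ for all $f\in\mathbb{R}^n$. $D^{\dagger}=(DD^* )^{-1}D$. For a matrix $E\in\mathbb{R}^{n\times d}$, $A$ obeys the $(E,q)$-RIP of order $k$ with constant $\delta\in[0,1)$ if $(1-\delta)\|Ev\|_2^q\leq\|AEv\|_q^q\leq(1+\delta)\|Ev\|_2^q$ for all $v\in\mathbb{R}^d$ with at most $k$ nonzero entries; $\delta_k$ denotes the smallest such $\delta$. $x_{[s]}$ keeps the $s$ largest entries of $x$ in magnitude and zeros the rest. *)

From HB Require Import structures.
From mathcomp Require Import all_boot all_order all_algebra.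
From mathcomp Require Import all_classical all_reals all_analysis.
Set Implicit Arguments. Unset Strict Implicit. Unset Printing Implicit Defensive.
Import Order.TTheory GRing.Theory Num.Theory.
Local Open Scope ring_scope.

Section Defs.
Variable R : realType.

Definition l2norm (n : nat) (v : 'cV[R]_n) : R :=
  Num.sqrt (\sum_i (v i ord0) ^+ 2).

Definition lqnormq (q : R) (n : nat) (v : 'cV[R]_n) : R :=
  \sum_i (`|v i ord0| `^ q).

Definition lqnorm (q : R) (n : nat) (v : 'cV[R]_n) : R :=
  (lqnormq q v) `^ (1 / q).

Definition sparse (d k : nat) (v : 'cV[R]_d) : Prop :=
  leq #|[set i | v i ord0 != 0%R]| k.

Definition is_frame (n d : nat) (D : 'M[R]_(n, d)) (L U : R) : Prop :=
  0 < L /\ L <= U /\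
  forall f : 'cV[R]_n,
    L * (l2norm f) ^+ 2 <= (l2norm (D^T *m f)) ^+ 2 /\
    (l2norm (D^T *m f)) ^+ 2 <= U * (l2norm f) ^+ 2.

Definition dagger (n d : nat) (D : 'M[R]_(n, d)) : 'M[R]_(n, d) :=
  invmx (D *m D^T) *m D.

Definition RIP (m n d : nat) (A : 'M[R]_(m, n)) (E : 'M[R]_(n, d))
  (q : R) (k : nat) (delta : R) : Prop :=
  0 <= delta < 1 /\
  forall v : 'cV[R]_d, sparse k v ->
    (1 - delta) * (l2norm (E *m v)) `^ q <= lqnormq q (A *m (E *m v)) /\
    lqnormq q (A *m (E *m v)) <= (1 + delta) * (l2norm (E *m v)) `^ q.

Definition RIP_const (m n d : nat) (A : 'M[R]_(m, n)) (E : 'M[R]_(n, d))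
  (q : R) (k : nat) (delta : R) : Prop :=
  RIP A E q k delta /\ forall delta', RIP A E q k delta' -> delta <= delta'.

Definition best_s_term (d s : nat) (x xs : 'cV[R]_d) : Prop :=
  exists S : {set 'I_d},
    #|S| = minn s d /\
    (forall i j, i \in S -> j \notin S -> `|x j ord0| <= `|x i ord0|) /\
    xs = \col_i (if i \in S then x i ord0 else 0).

End Defs.

(* Write h := fhat - f and x := D^T h, so that D^dagger x = h lies in the kernel of A,
   and minimality of ||D^T fhat||_q gives the cone constraint
     ||x_(S^c)||_q^q <= ||x_S||_q^q + 2 ||(D^T f)_(S^c)||_q^q.
   Let T collect the a largest entries of x off S and cut the remaining tail into
   blocks of a decreasing entries: each entry of a block is dominated by the q-mean of
   the previous block.  This bounds ||x_tail||_2 and, through the upper RIP of order a,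
   A D^dagger x_tail = - A D^dagger x_(S u T), whose preimage is then controlled by the
   lower RIP of order s + a.  As D^T D^dagger projects onto the range of D^T, the frame
   bounds give ||x_(S u T)||^2 <= sqrt U ||D^dagger x_(S u T)|| ||x||, and Jensen's
   inequality bounds ||x_S||_q by ||x_(S u T)||_2.  The hypothesis on the RIP constants
   is exactly what lets these three inequalities bound ||x|| by the q-tail of D^T f;
   finally ||h|| <= ||x|| / sqrt L. *)

From HB Require Import structures.
From mathcomp Require Import all_boot all_order all_algebra.
From mathcomp Require Import all_classical all_reals all_analysis.
From mathcomp Require Import ring lra.
Import Order.TTheory GRing.Theory Num.Theory.
Set Implicit Arguments. Unset Strict Implicit. Unset Printing Implicit Defensive.
Local Open Scope ring_scope.

Section RealPowers.
Variable R : realType.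
Implicit Types (x y u p r : R).

Lemma ler_powR2r r x y : 0 < r -> 0 <= x -> 0 <= y -> (x `^ r <= y `^ r) = (x <= y).
Proof.
move=> r0 x0 y0; apply/idP/idP => [|xy].
  by apply: contraTT; rewrite -!ltNge; apply: gt0_ltr_powR; rewrite ?nnegrE.
by apply: (ge0_ler_powR (ltW r0)); rewrite ?nnegrE.
Qed.

Lemma powRVK r x : 0 <= x -> r != 0 -> (x `^ r^-1) `^ r = x.
Proof. by move=> x0 r0; rewrite -powRrM mulVf // powRr1. Qed.

Lemma powRKV r x : 0 <= x -> r != 0 -> (x `^ r) `^ r^-1 = x.
Proof. by move=> x0 r0; rewrite -powRrM mulfV // powRr1. Qed.

Lemma powR_sqr_half x r : (x ^+ 2) `^ (r / 2) = `|x| `^ r.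
Proof.
rewrite -real_normK ?num_real // -powR_mulrn ?normr_ge0 // -powRrM.
by congr (_ `^ _); rewrite mulrC mulfVK ?pnatr_eq0.
Qed.

(* Scaling by [x + y] reduces subadditivity to [t <= t `^ q] on [0, 1]. *)
Lemma powRD_le x y q : 0 <= x -> 0 <= y -> 0 < q -> q <= 1 ->
  (x + y) `^ q <= x `^ q + y `^ q.
Proof.
move=> x0 y0 q0 q1.
have [->|xy0] := eqVneq (x + y) 0.
  by rewrite powR0 ?gt_eqF // addr_ge0 ?powR_ge0.
have t0 : 0 < x + y by rewrite lt_def xy0 addr_ge0.
have scale u : 0 <= u -> u `^ q = (x + y) `^ q * (u / (x + y)) `^ q.
  by move=> u0; rewrite -powRM ?divr_ge0 ?(ltW t0) // mulrC divfK.
have le_pow u : 0 <= u -> u <= x + y -> u / (x + y) <= (u / (x + y)) `^ q.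
  move=> u0 ux; have [->|un0] := eqVneq u 0; first by rewrite mul0r powR_ge0.
  apply: ger1_powR => //.
  by rewrite ler_pdivrMr // mul1r ux andbT divr_gt0 // lt_def un0.
rewrite (scale x x0) (scale y y0) -mulrDr -{1}(mulr1 ((x + y) `^ q)).
rewrite ler_wpM2l ?powR_ge0 //.
apply: le_trans (lerD (le_pow x x0 _) (le_pow y y0 _)).
- by rewrite -mulrDl divff.
- by rewrite lerDl.
- by rewrite lerDr.
Qed.

Lemma normD_powR_le u v q : 0 < q -> q <= 1 -> `|u + v| `^ q <= `|u| `^ q + `|v| `^ q.
Proof.
move=> q0 q1; apply: le_trans (powRD_le (normr_ge0 _) (normr_ge0 _) q0 q1).
by rewrite ler_powR2r ?addr_ge0 ?ler_normD.
Qed.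

(* Young's inequality [a b <= a^P / P + b^Q / Q] at [a = u `^ p], [b = 1], [P = 1/p]. *)
Lemma powR_le_tangent u p : 0 <= u -> 0 < p -> p < 1 -> u `^ p <= 1 - p + p * u.
Proof.
move=> u0 p0 p1.
have := @conjugate_powR R (u `^ p) 1 p^-1 (1 - p)^-1 (powR_ge0 _ _) ler01.
rewrite !invr_gt0 subr_gt0 !invrK mulr1 powRKV ?gt_eqF // powR1.
by move/(_ p0 p1 (subrKC _ _)); rewrite mul1r addrC mulrC.
Qed.

Lemma sum_powR_le (I : finType) (T : {set I}) (w : I -> R) p :
  (forall i, 0 <= w i) -> 0 < p -> p < 1 ->
  \sum_(i in T) w i `^ p <= #|T|%:R `^ (1 - p) * (\sum_(i in T) w i) `^ p.
Proof.
move=> w0 p0 p1; set W := \sum_(i in T) w i.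
have W0 : 0 <= W by apply: sumr_ge0.
have [W_eq0|W_neq0] := eqVneq W 0.
  have wi0 := psumr_eq0P (fun i _ => w0 i) W_eq0.
  rewrite big1 ?mulr_ge0 ?powR_ge0 // => i iT.
  by rewrite wi0 // powR0 ?gt_eqF.
have T0 : (0 < #|T|)%N.
  by rewrite card_gt0; apply: contraNneq W_neq0 => T0; rewrite /W T0 big_set0.
set k : R := #|T|%:R; set mean := W / k.
have k0 : 0 < k by rewrite ltr0n.
have mean0 : 0 < mean by rewrite divr_gt0 // lt_def W_neq0.
have tangent i : w i `^ p <= mean `^ p * (1 - p + p * (w i / mean)).
  rewrite -{1}(divfK (lt0r_neq0 mean0) (w i)) mulrC powRM ?divr_ge0 ?(ltW mean0) //.
  by rewrite ler_wpM2l ?powR_ge0 // powR_le_tangent ?divr_ge0 ?(ltW mean0).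
apply: le_trans (ler_sum _ (fun i _ => tangent i)) _.
have sum_ratio : \sum_(i in T) w i / mean = k.
  by rewrite -mulr_suml -/W /mean invf_div mulrCA divff // mulr1.
rewrite -mulr_sumr big_split /= sumr_const -mulr_sumr sum_ratio.
rewrite -mulr_natr -/k mulrBl mul1r subrK /mean.
rewrite powRM ?invr_ge0 ?(ltW k0) // -powR_inv1 ?(ltW k0) // -powRrM mulN1r powRN.
rewrite powRB ?gt_eqF ?implybT // powRr1 ?(ltW k0) //.
by rewrite mulrAC [leRHS]mulrC mulrA.
Qed.

End RealPowers.

Section Vectors.
Variable R : realType.

Definition vdot n (u v : 'cV[R]_n) : R := \sum_i u i ord0 * v i ord0.

Lemma vdotC n (u v : 'cV[R]_n) : vdot u v = vdot v u.
Proof. by apply: eq_bigr => i _; rewrite mulrC. Qed.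

Lemma vdot_trmx n d (M : 'M[R]_(n, d)) (u : 'cV[R]_n) (w : 'cV[R]_d) :
  vdot (M^T *m u) w = vdot u (M *m w).
Proof.
rewrite /vdot; under eq_bigr => j _ do rewrite mxE mulr_suml.
rewrite exchange_big /=; apply: eq_bigr => i _; rewrite mxE mulr_sumr.
by apply: eq_bigr => j _; rewrite mxE; ring.
Qed.

Lemma l2norm_ge0 n (v : 'cV[R]_n) : 0 <= l2norm v.
Proof. exact: sqrtr_ge0. Qed.

Lemma l2norm_sqr n (v : 'cV[R]_n) : l2norm v ^+ 2 = vdot v v.
Proof.
rewrite /l2norm sqr_sqrtr; last by apply: sumr_ge0 => i _; apply: sqr_ge0.
by apply: eq_bigr => i _; rewrite expr2.
Qed.

Lemma l2norm_eq0 n (v : 'cV[R]_n) : l2norm v = 0 -> v = 0.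
Proof.
move=> v0; have /psumr_eq0P vi0 : vdot v v = 0 by rewrite -l2norm_sqr v0 expr0n.
apply/matrixP => i j; rewrite ord1 mxE; apply/eqP; rewrite -sqrf_eq0 expr2.
by rewrite vi0 // => k _; rewrite -expr2 sqr_ge0.
Qed.

Lemma cauchy_schwarz n (u v : 'cV[R]_n) : vdot u v <= l2norm u * l2norm v.
Proof.
set a := l2norm u; set b := l2norm v.
have [a0|a_neq0] := eqVneq a 0.
  rewrite (l2norm_eq0 a0) /vdot big1 ?mulr_ge0 ?l2norm_ge0 // => i _.
  by rewrite mxE mul0r.
have [b0|b_neq0] := eqVneq b 0.
  rewrite (l2norm_eq0 b0) /vdot big1 ?mulr_ge0 ?l2norm_ge0 // => i _.
  by rewrite mxE mulr0.
have ab0 : 0 < 2 * a * b by rewrite !mulr_gt0 // lt_def ?a_neq0 ?b_neq0 l2norm_ge0.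
have sum_sqr_ge0 : 2 * a * b * vdot u v <= b ^+ 2 * vdot u u + a ^+ 2 * vdot v v.
  rewrite /vdot !mulr_sumr -big_split /=; apply: ler_sum => i _.
  have := sqr_ge0 (b * u i ord0 - a * v i ord0); nra.
rewrite -!l2norm_sqr -/a -/b in sum_sqr_ge0.
rewrite -(ler_pM2l ab0); nra.
Qed.

Lemma l2normD_le n (u v : 'cV[R]_n) : l2norm (u + v) <= l2norm u + l2norm v.
Proof.
rewrite -ler_sqr ?nnegrE ?addr_ge0 ?l2norm_ge0 //.
have -> : l2norm (u + v) ^+ 2 = l2norm u ^+ 2 + 2 * vdot u v + l2norm v ^+ 2.
  rewrite !l2norm_sqr /vdot mulr_sumr -!big_split /=; apply: eq_bigr => i _.
  by rewrite !mxE; ring.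
have := cauchy_schwarz u v; nra.
Qed.

Lemma lqnormq_ge0 q n (v : 'cV[R]_n) : 0 <= lqnormq q v.
Proof. by apply: sumr_ge0 => i _; apply: powR_ge0. Qed.

Lemma lqnormqN q n (v : 'cV[R]_n) : lqnormq q (- v) = lqnormq q v.
Proof. by apply: eq_bigr => i _; rewrite mxE normrN. Qed.

Lemma lqnormqD_le q n (u v : 'cV[R]_n) : 0 < q -> q <= 1 ->
  lqnormq q (u + v) <= lqnormq q u + lqnormq q v.
Proof.
move=> q0 q1; rewrite /lqnormq -big_split /=; apply: ler_sum => i _.
by rewrite mxE normD_powR_le.
Qed.

Definition restr d (T : {set 'I_d}) (x : 'cV[R]_d) : 'cV[R]_d :=
  \col_i (if i \in T then x i ord0 else 0).

Lemma restrT d (x : 'cV[R]_d) : restr [set: 'I_d] x = x.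
Proof. by apply/matrixP => i j; rewrite ord1 !mxE inE. Qed.

Lemma restr_setD d (T Rem : {set 'I_d}) (x : 'cV[R]_d) : T \subset Rem ->
  restr Rem x = restr T x + restr (Rem :\: T) x.
Proof.
move=> /fintype.subsetP TRem; apply/matrixP => i j; rewrite !mxE !inE.
by case: (boolP (i \in T)) => [/TRem -> | _] /=; rewrite ?addr0 ?add0r.
Qed.

Lemma restr_setC d (T : {set 'I_d}) (x : 'cV[R]_d) :
  x = restr T x + restr (~: T) x.
Proof. by rewrite -finset.setTD -restr_setD ?finset.subsetT ?restrT. Qed.

Lemma subr_restr d (T : {set 'I_d}) (x : 'cV[R]_d) : x - restr T x = restr (~: T) x.
Proof. by rewrite {1}(restr_setC T x) addrAC subrr add0r. Qed.

Lemma sum_restr d (T : {set 'I_d}) (x : 'cV[R]_d) (g : R -> R) : g 0 = 0 ->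
  \sum_i g (restr T x i ord0) = \sum_(i in T) g (x i ord0).
Proof.
move=> g0; rewrite [RHS]big_mkcond /=; apply: eq_bigr => i _; rewrite mxE.
by case: (i \in T).
Qed.

Lemma lqnormq_restr q d (T : {set 'I_d}) (x : 'cV[R]_d) : q != 0 ->
  lqnormq q (restr T x) = \sum_(i in T) `|x i ord0| `^ q.
Proof.
by move=> q0; rewrite /lqnormq (@sum_restr _ T x (fun t => `|t| `^ q)) // normr0 powR0.
Qed.

Lemma l2norm_restr_sqr d (T : {set 'I_d}) (x : 'cV[R]_d) :
  l2norm (restr T x) ^+ 2 = \sum_(i in T) x i ord0 ^+ 2.
Proof.
rewrite /l2norm sqr_sqrtr; last by apply: sumr_ge0 => i _; apply: sqr_ge0.
by rewrite (@sum_restr _ T x (fun t => t ^+ 2)) // expr0n.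
Qed.

Lemma vdot_restr d (T : {set 'I_d}) (x : 'cV[R]_d) :
  vdot (restr T x) x = \sum_(i in T) x i ord0 ^+ 2.
Proof.
rewrite /vdot [RHS]big_mkcond /=; apply: eq_bigr => i _; rewrite mxE.
by case: (i \in T); rewrite ?mul0r // expr2.
Qed.

Lemma sparse_restr d k (T : {set 'I_d}) (x : 'cV[R]_d) : (#|T| <= k)%N ->
  sparse k (restr T x).
Proof.
move=> Tk; apply: leq_trans Tk; apply: subset_leq_card; apply/fintype.subsetP => i.
by rewrite inE mxE; case: (i \in T); rewrite ?eqxx.
Qed.

End Vectors.

Section TopEntries.
Variables (R : realType) (d : nat) (x : 'cV[R]_d).

Lemma exists_top_subset (Rem : {set 'I_d}) k :
  exists T : {set 'I_d}, [/\ T \subset Rem, #|T| = minn k #|Rem| &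
    forall i j, i \in T -> j \in Rem :\: T -> `|x j ord0| <= `|x i ord0|].
Proof.
suff top l : (l <= #|Rem|)%N -> exists T : {set 'I_d}, [/\ T \subset Rem, #|T| = l &
    forall i j, i \in T -> j \in Rem :\: T -> `|x j ord0| <= `|x i ord0|].
  by apply: top; rewrite geq_minr.
elim: l => [_|l IHl lRem].
  by exists finset.set0; split; rewrite ?finset.sub0set ?cards0 // => i j; rewrite inE.
have [T [TRem Tl Tmax]] := IHl (ltnW lRem).
have : Rem :\: T != finset.set0.
  by rewrite -card_gt0 cardsD (finset.setIidPr TRem) Tl subn_gt0.
case/finset.set0Pn => j0 j0D.
have [j jD jmax] := @arg_maxP _ _ _ j0 (mem (Rem :\: T)) (fun i => `|x i ord0|) j0D.
have /finset.setDP [jRem jT] := jD.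
exists (j |: T); split.
- by rewrite finset.subUset finset.sub1set jRem TRem.
- by rewrite cardsU1 jT Tl.
- move=> i j1; rewrite !inE negb_or => /predU1P [-> | iT] /andP [/andP [_ j1T] j1Rem].
    by apply: jmax; apply/finset.setDP.
  by apply: Tmax; rewrite // inE j1T j1Rem.
Qed.

Lemma card_top_subset (T Rem : {set 'I_d}) k j : T \subset Rem ->
  #|T| = minn k #|Rem| -> j \in Rem :\: T -> #|T| = k.
Proof.
move=> TRem Tk jD; rewrite Tk; apply/minn_idPl; rewrite leqNgt; apply/negP => lt.
have : #|Rem :\: T| = 0%N.
  by rewrite cardsD (finset.setIidPr TRem) Tk (minn_idPr (ltnW lt)) subnn.
by move/eqP; rewrite cards_eq0 => /eqP D0; rewrite D0 inE in jD.
Qed.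

Lemma card_mul_powR_le_sum (T : {set 'I_d}) j q : 0 <= q ->
  (forall i, i \in T -> `|x j ord0| <= `|x i ord0|) ->
  #|T|%:R * `|x j ord0| `^ q <= \sum_(i in T) `|x i ord0| `^ q.
Proof.
move=> q0 jmin; rewrite mulr_natl -sumr_const.
by apply: ler_sum => i iT; apply: (ge0_ler_powR q0); rewrite ?nnegrE ?jmin.
Qed.

(* Each entry is at most [b := (V / a) `^ (1 / q)], so [||x_T||_2 <= sqrt a * b]. *)
Lemma l2norm_restr_small_entries (T : {set 'I_d}) (a : nat) q V :
  (0 < a)%N -> 0 < q -> 0 <= V -> (#|T| <= a)%N ->
  (forall i, i \in T -> a%:R * `|x i ord0| `^ q <= V) ->
  l2norm (restr T x) `^ q <= a%:R `^ (q / 2 - 1) * V.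
Proof.
move=> a0 q0 V0 Ta small.
have ar : (0 : R) < a%:R by rewrite ltr0n.
set b := (V / a%:R) `^ q^-1.
have b0 : 0 <= b by apply: powR_ge0.
have bq : b `^ q = V / a%:R by rewrite powRVK ?gt_eqF // divr_ge0 // ltW.
have xb i : i \in T -> x i ord0 ^+ 2 <= b ^+ 2.
  move=> iT; rewrite -real_normK ?num_real // ler_sqr ?nnegrE ?normr_ge0 //.
  by rewrite -(ler_powR2r q0) ?normr_ge0 // bq ler_pdivlMr // mulrC small.
have l2T : l2norm (restr T x) <= Num.sqrt a%:R * b.
  rewrite -ler_sqr ?nnegrE ?mulr_ge0 ?sqrtr_ge0 ?l2norm_ge0 //.
  rewrite l2norm_restr_sqr exprMn sqr_sqrtr ?ler0n //.
  apply: le_trans (ler_sum _ xb) _; rewrite sumr_const -[_ *+ #|T|]mulr_natl.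
  by rewrite ler_wpM2r ?sqr_ge0 ?ler_nat.
apply: le_trans (_ : _ <= (Num.sqrt a%:R * b) `^ q) _.
  by rewrite ler_powR2r ?l2norm_ge0 ?mulr_ge0 ?sqrtr_ge0.
rewrite powRM ?sqrtr_ge0 // bq -powR12_sqrt ?ler0n // -powRrM.
rewrite (mulrC 2^-1 q) powRB ?(gt_eqF ar) ?implybT // powRr1 ?ler0n //.
by rewrite mulrA [leRHS]mulrAC.
Qed.

End TopEntries.

Section BlockDecomposition.
Variables (R : realType) (d : nat) (x : 'cV[R]_d) (F : 'cV[R]_d -> R).
Variables (K q : R) (a : nat).
Hypotheses (a0 : (0 < a)%N) (q0 : 0 < q) (K0 : 0 <= K).
Hypothesis FD_le : forall u v, F (u + v) <= F u + F v.
Hypothesis F_sparse : forall T : {set 'I_d},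
  (#|T| <= a)%N -> F (restr T x) <= K * l2norm (restr T x) `^ q.

Let F_small_entries (T : {set 'I_d}) V : 0 <= V -> (#|T| <= a)%N ->
  (forall i, i \in T -> a%:R * `|x i ord0| `^ q <= V) ->
  F (restr T x) <= K * a%:R `^ (q / 2 - 1) * V.
Proof.
move=> V0 Ta small; apply: le_trans (F_sparse Ta) _.
by rewrite -mulrA ler_wpM2l // l2norm_restr_small_entries.
Qed.

(* Peel off blocks of the [a] largest entries of [Rem]: the entries of each block are
   dominated by the q-mass of the previous block, those of the first one by [V]. *)
Lemma block_decomposition_le (Rem : {set 'I_d}) V : 0 <= V ->
  (forall i, i \in Rem -> a%:R * `|x i ord0| `^ q <= V) ->
  F (restr Rem x) <= K * a%:R `^ (q / 2 - 1) * (V + \sum_(i in Rem) `|x i ord0| `^ q).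
Proof.
have [N] := ubnP #|Rem|; elim: N Rem V => // N IHN Rem V RemN V0 small.
have [-> | Rem_neq0] := eqVneq Rem finset.set0.
  apply: le_trans (F_small_entries V0 _ _) _ => [|i|]; rewrite ?cards0 ?inE //.
  by rewrite big_set0 addr0.
have [T [TRem Tcard Tmax]] := exists_top_subset x Rem a.
have T0 : (0 < #|T|)%N by rewrite Tcard leq_min a0 card_gt0.
set V' := \sum_(i in T) `|x i ord0| `^ q.
have V'0 : 0 <= V' by rewrite sumr_ge0 // => i _; apply: powR_ge0.
have headT : F (restr T x) <= K * a%:R `^ (q / 2 - 1) * V.
  apply: F_small_entries; rewrite // ?Tcard ?geq_minl // => i iT.
  by apply: small; apply: (fintype.subsetP TRem).
have tailT : F (restr (Rem :\: T) x) <=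
    K * a%:R `^ (q / 2 - 1) * (V' + \sum_(i in Rem :\: T) `|x i ord0| `^ q).
  apply: IHN => // [|j jD].
    rewrite cardsD (finset.setIidPr TRem) -ltnS (leq_trans _ RemN) // ltnS.
    by rewrite ltn_subrL T0 card_gt0.
  rewrite -(card_top_subset TRem Tcard jD).
  by apply: card_mul_powR_le_sum; [apply: ltW | move=> i iT; apply: Tmax].
have sum_split : \sum_(i in Rem) `|x i ord0| `^ q =
    V' + \sum_(i in Rem :\: T) `|x i ord0| `^ q.
  by rewrite (big_setID T) /= (finset.setIidPr TRem).
rewrite (restr_setD x TRem); apply: le_trans (FD_le _ _) _.
by apply: le_trans (lerD headT tailT) _; rewrite -mulrDr sum_split.
Qed.

End BlockDecomposition.

Section Frame.
Variables (R : realType) (n d : nat) (D : 'M[R]_(n, d)) (L U : R).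
Hypothesis frameD : is_frame D L U.

Lemma frame_lower (w : 'cV[R]_n) : Num.sqrt L * l2norm w <= l2norm (D^T *m w).
Proof.
have [L0 [_ bounds]] := frameD.
rewrite -ler_sqr ?nnegrE ?mulr_ge0 ?sqrtr_ge0 ?l2norm_ge0 //.
by rewrite exprMn (sqr_sqrtr (ltW L0)) (bounds w).1.
Qed.

Lemma frame_upper (w : 'cV[R]_n) : l2norm (D^T *m w) <= Num.sqrt U * l2norm w.
Proof.
have [L0 [LU bounds]] := frameD.
rewrite -ler_sqr ?nnegrE ?mulr_ge0 ?sqrtr_ge0 ?l2norm_ge0 //.
by rewrite exprMn (sqr_sqrtr (le_trans (ltW L0) LU)) (bounds w).2.
Qed.

Lemma frame_unitmx : D *m D^T \in unitmx.
Proof.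
have [L0 _] := frameD.
rewrite unitmxE unitfE; apply/negP => /det0P [v v_neq0 vDDt].
have DDtv : D *m (D^T *m v^T) = 0.
  by rewrite mulmxA -[D *m D^T]trmxK trmx_mul trmxK -trmx_mul vDDt trmx0.
have Dtv0 : l2norm (D^T *m v^T) = 0.
  apply/eqP; rewrite -sqrf_eq0 l2norm_sqr vdot_trmx DDtv.
  by rewrite /vdot big1 // => i _; rewrite !mxE mulr0.
have : Num.sqrt L * l2norm v^T <= 0 by rewrite -Dtv0 frame_lower.
rewrite pmulr_rle0 ?sqrtr_gt0 // => v0.
have /l2norm_eq0 /(congr1 trmx) : l2norm v^T = 0.
  by apply/eqP; rewrite eq_le v0 l2norm_ge0.
by rewrite trmxK trmx0 => v_eq0; rewrite v_eq0 eqxx in v_neq0.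
Qed.

Lemma dagger_trmx (h : 'cV[R]_n) : dagger D *m (D^T *m h) = h.
Proof. by rewrite /dagger mulmxA -(mulmxA (invmx _)) mulVmx ?frame_unitmx // mul1mx. Qed.

Lemma mulmx_tr_dagger : D *m D^T *m dagger D = D.
Proof. by rewrite /dagger mulmxA mulmxV ?frame_unitmx // mul1mx. Qed.

Lemma l2norm_dagger_le (v : 'cV[R]_d) : Num.sqrt L * l2norm (dagger D *m v) <= l2norm v.
Proof.
set w := dagger D *m v; apply: le_trans (frame_lower w) _.
have Dtw_sqr : l2norm (D^T *m w) ^+ 2 = vdot (D^T *m w) v.
  by rewrite l2norm_sqr !vdot_trmx /w mulmxA (mulmxA (D *m D^T)) mulmx_tr_dagger.
have := cauchy_schwarz (D^T *m w) v; rewrite -Dtw_sqr.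
have := l2norm_ge0 (D^T *m w); have := l2norm_ge0 v; nra.
Qed.

(* [D^T D^dagger] is the orthogonal projection onto the range of [D^T]. *)
Lemma vdot_analysis_le (h : 'cV[R]_n) (v : 'cV[R]_d) :
  vdot v (D^T *m h) <= Num.sqrt U * l2norm (dagger D *m v) * l2norm (D^T *m h).
Proof.
rewrite vdotC vdot_trmx -{1}mulmx_tr_dagger -(mulmxA (D *m D^T)) -mulmxA -vdot_trmx.
apply: le_trans (cauchy_schwarz _ _) _; rewrite mulrC.
by apply: ler_wpM2r; [exact: l2norm_ge0 | exact: frame_upper].
Qed.

End Frame.

Lemma cone_constraint (R : realType) d (z x : 'cV[R]_d) (S : {set 'I_d}) q :
  0 < q -> q <= 1 -> lqnormq q (z + x) <= lqnormq q z ->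
  \sum_(i in ~: S) `|x i ord0| `^ q <=
    \sum_(i in S) `|x i ord0| `^ q + 2 * \sum_(i in ~: S) `|z i ord0| `^ q.
Proof.
move=> q0 q1; have split_sum (y : 'cV[R]_d) : lqnormq q y =
    \sum_(i in S) `|y i ord0| `^ q + \sum_(i in ~: S) `|y i ord0| `^ q.
  rewrite /lqnormq (bigID (mem S)) /=; congr (_ + _).
  by apply: eq_bigl => i; rewrite !inE.
have zS : \sum_(i in S) `|z i ord0| `^ q <=
    \sum_(i in S) `|(z + x) i ord0| `^ q + \sum_(i in S) `|x i ord0| `^ q.
  rewrite -big_split /=; apply: ler_sum => i _; rewrite mxE.
  by have := normD_powR_le (z i ord0 + x i ord0) (- x i ord0) q0 q1; rewrite addrK normrN.
have xSc : \sum_(i in ~: S) `|x i ord0| `^ q <=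
    \sum_(i in ~: S) `|(z + x) i ord0| `^ q + \sum_(i in ~: S) `|z i ord0| `^ q.
  rewrite -big_split /=; apply: ler_sum => i _; rewrite mxE.
  have := normD_powR_le (z i ord0 + x i ord0) (- z i ord0) q0 q1.
  by rewrite addrAC subrr add0r normrN.
rewrite !split_sum; lra.
Qed.

Section HeadTailInequality.
Variable R : realType.
Implicit Types (X M G N P tau q : R).

Definition cone_ratio P tau : R := P * tau * Num.sqrt (1 + tau ^+ 2).
Definition cone_gap P tau q : R := 1 - Num.sqrt ((1 + cone_ratio P tau) / 2) `^ q.
Definition nsp_const P tau q : R := (2 + 4 * P) * (cone_gap P tau q)^-1 `^ q^-1.

Lemma cone_ratio_ge0 P tau : 0 <= P -> 0 <= tau -> 0 <= cone_ratio P tau.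
Proof. by move=> P0 tau0; rewrite !mulr_ge0 ?sqrtr_ge0. Qed.

Lemma cone_gap_gt0 P tau q : 0 <= P -> 0 <= tau -> 0 < q -> cone_ratio P tau < 1 ->
  0 < cone_gap P tau q.
Proof.
move=> P0 tau0 q0 Q1; have Q0 := cone_ratio_ge0 P0 tau0.
have nu_lt1 : Num.sqrt ((1 + cone_ratio P tau) / 2) < 1.
  by rewrite -[X in _ < X]sqrtr1 ltr_sqrt ?ltr01 //; lra.
rewrite subr_gt0; have := gt0_ltr_powR q0 _ _ nu_lt1.
by rewrite powR1 nnegrE sqrtr_ge0 nnegrE ler01; apply.
Qed.

Lemma nsp_const_gt0 P tau q : 0 <= P -> 0 <= tau -> 0 < q -> cone_ratio P tau < 1 ->
  0 < nsp_const P tau q.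
Proof.
move=> P0 tau0 q0 Q1; rewrite /nsp_const mulr_gt0 ?powR_gt0 ?invr_gt0 ?cone_gap_gt0 //.
lra.
Qed.

Lemma head_tail_le X M N P : 0 <= X -> 0 <= M -> 0 <= N -> 0 <= P ->
  N ^+ 2 <= X ^+ 2 + M ^+ 2 -> X ^+ 2 <= P * M * N -> N <= (2 + 4 * P) * M.
Proof.
move=> X0 M0 N0 P0 N_sqr X_sqr.
have [XM | MX] := leP X M.
  have XM_sqr : X ^+ 2 <= M ^+ 2 by rewrite ler_sqr ?nnegrE.
  have : N <= 2 * M by rewrite -ler_sqr ?nnegrE ?mulr_ge0 //; nra.
  nra.
have X_pos : 0 < X by apply: le_lt_trans MX.
have MX_sqr : M ^+ 2 <= X ^+ 2 by rewrite ler_sqr ?nnegrE // ltW.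
have NX : N <= 2 * X by rewrite -ler_sqr ?nnegrE ?mulr_ge0 //; nra.
have : X * X <= (2 * P * M) * X.
  rewrite -expr2; apply: le_trans X_sqr _.
  have := ler_wpM2l (mulr_ge0 P0 M0) NX; nra.
rewrite ler_pM2r // => XPM; nra.
Qed.

(* With [Q := cone_ratio P tau] and [nu ^+ 2 = (1 + Q) / 2 > Q], the hypotheses
   force [nu ^+ 4 X ^+ 4 <= Q ^+ 2 X ^+ 4], hence [X = 0]. *)
Lemma head_tail_eq0 X M N P tau : 0 <= X -> 0 <= M -> 0 <= N -> 0 <= P ->
  0 <= tau -> cone_ratio P tau < 1 ->
  N ^+ 2 <= X ^+ 2 + M ^+ 2 -> X ^+ 2 <= P * M * N ->
  Num.sqrt ((1 + cone_ratio P tau) / 2) * M <= tau * X -> N = 0.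
Proof.
set Q := cone_ratio P tau; set nu := Num.sqrt _.
move=> X0 M0 N0 P0 tau0 Q1 N_sqr X_sqr nuM.
have Q0 : 0 <= Q := cone_ratio_ge0 P0 tau0.
have nu_sqr : nu ^+ 2 = (1 + Q) / 2 by rewrite sqr_sqrtr //; lra.
have nu_pos : 0 < nu by rewrite sqrtr_gt0; lra.
have Q_sqr : Q ^+ 2 = P ^+ 2 * tau ^+ 2 * (1 + tau ^+ 2).
  by rewrite /Q /cone_ratio !exprMn sqr_sqrtr // addr_ge0 ?sqr_ge0.
have nu0 : 0 <= nu := ltW nu_pos.
have X_eq0 : X = 0.
  apply/eqP; rewrite eq_le X0 andbT leNgt; apply/negP => X_pos.
  have nuM_sqr : nu ^+ 2 * M ^+ 2 <= tau ^+ 2 * X ^+ 2.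
    by rewrite -!exprMn ler_sqr ?nnegrE ?mulr_ge0.
  have nuN_sqr : nu ^+ 2 * N ^+ 2 <= (1 + tau ^+ 2) * X ^+ 2 by nra.
  have X4 : X ^+ 4 <= P ^+ 2 * M ^+ 2 * N ^+ 2.
    by rewrite -[4%N]/(2 * 2)%N exprM -!exprMn ler_sqr ?nnegrE ?mulr_ge0 ?sqr_ge0.
  have nu4X4 : nu ^+ 2 * nu ^+ 2 * X ^+ 4 <=
      P ^+ 2 * (nu ^+ 2 * M ^+ 2) * (nu ^+ 2 * N ^+ 2).
    have := ler_wpM2l (mulr_ge0 (sqr_ge0 nu) (sqr_ge0 nu)) X4; lra.
  have : nu ^+ 2 * nu ^+ 2 * X ^+ 4 <= Q ^+ 2 * X ^+ 4.
    apply: le_trans nu4X4 _; rewrite Q_sqr.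
    apply: le_trans (ler_pM _ _ (ler_wpM2l (sqr_ge0 P) nuM_sqr) nuN_sqr) _;
      rewrite ?mulr_ge0 ?sqr_ge0 //.
    lra.
  rewrite ler_pM2r ?exprn_gt0 // nu_sqr; nra.
have M_eq0 : M = 0 by move: nuM; rewrite X_eq0 mulr0; nra.
by move: N_sqr; rewrite X_eq0 M_eq0 expr0n /= addr0; nra.
Qed.

(* Either [G `^ q] is small against [M `^ q], and then [head_tail_eq0] applies,
   or [M] is controlled by [G]. *)
Lemma head_tail_bound X M G N P tau q :
  0 <= X -> 0 <= M -> 0 <= G -> 0 <= N -> 0 <= P -> 0 <= tau -> 0 < q ->
  cone_ratio P tau < 1 ->
  N ^+ 2 <= X ^+ 2 + M ^+ 2 -> X ^+ 2 <= P * M * N ->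
  M `^ q <= (tau * X) `^ q + G `^ q ->
  N <= nsp_const P tau q * G.
Proof.
move=> X0 M0 G0 N0 P0 tau0 q0 Q1 N_sqr X_sqr M_pow.
have gap0 := cone_gap_gt0 P0 tau0 q0 Q1.
have const0 := nsp_const_gt0 P0 tau0 q0 Q1.
have [G_small | G_large] := leP (G `^ q) (cone_gap P tau q * M `^ q).
  suff -> : N = 0 by rewrite mulr_ge0 // ltW.
  apply: (head_tail_eq0 X0 M0 N0 P0 tau0 Q1 N_sqr X_sqr).
  rewrite -(ler_powR2r q0) ?mulr_ge0 ?sqrtr_ge0 // [in leLHS]powRM ?sqrtr_ge0 //.
  by move: M_pow G_small; rewrite /cone_gap; lra.
apply: le_trans (head_tail_le X0 M0 N0 P0 N_sqr X_sqr) _.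
rewrite /nsp_const -mulrA ler_wpM2l //; first lra.
rewrite -(ler_powR2r q0) ?mulr_ge0 ?powR_ge0 // powRM ?powR_ge0 //.
by rewrite powRVK ?gt_eqF ?invr_ge0 ?(ltW gap0) // mulrC ler_pdivlMr //; lra.
Qed.

End HeadTailInequality.

Section Constants.
Variable R : realType.

Definition cond_rip_factor (kappa da dsa q : R) : R :=
  Num.sqrt kappa * ((1 + da) / (1 - dsa)) `^ q^-1.

Definition sparsity_factor (rho q : R) : R := rho `^ (q^-1 - 2^-1).

Definition recovery_const (da dsa rho q L kappa : R) : R :=
  nsp_const (cond_rip_factor kappa da dsa q) (sparsity_factor rho q) q
    * 2 `^ q^-1 * sparsity_factor rho q / Num.sqrt L.

Lemma sparsity_factor_powR rho q : 0 <= rho -> 0 < q ->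
  sparsity_factor rho q `^ q = rho `^ (1 - q / 2).
Proof.
by move=> rho0 q0; rewrite -powRrM; congr (_ `^ _); field; rewrite gt_eqF.
Qed.

Lemma cone_ratio_lt1 (q rho kappa da dsa : R) :
  0 < q -> 0 < rho -> 1 <= kappa -> 0 <= da -> dsa < 1 ->
  rho `^ (1 - q / 2) * (rho `^ (2 / q - 1) + 1) `^ (q / 2) * kappa `^ q * (1 + da)
    < 1 - dsa ->
  cone_ratio (cond_rip_factor kappa da dsa q) (sparsity_factor rho q) < 1.
Proof.
move=> q0 rho0 kappa1 da0 dsa1 H.
set c := (1 + da) / (1 - dsa); set tau := sparsity_factor rho q.
have c0 : 0 <= c by rewrite divr_ge0 ?subr_ge0 ?ltW //; lra.
have tau0 : 0 <= tau by apply: powR_ge0.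
have kappa0 : 0 <= kappa by lra.
have sqrt_powR y : 0 <= y -> Num.sqrt y `^ q = y `^ (q / 2).
  by move=> y0; rewrite -powR12_sqrt // -powRrM mulrC.
have tau_sqr : tau ^+ 2 = rho `^ (2 / q - 1).
  rewrite -powR_mulrn ?powR_ge0 // -powRrM; congr (_ `^ _).
  by field; rewrite gt_eqF.
set P := cond_rip_factor kappa da dsa q.
have P0 : 0 <= P by rewrite mulr_ge0 ?sqrtr_ge0 ?powR_ge0.
have P_pow : P `^ q = kappa `^ (q / 2) * c.
  by rewrite (powRM _ (sqrtr_ge0 _) (powR_ge0 _ _)) sqrt_powR // powRVK ?gt_eqF.
have Qq : cone_ratio P tau `^ q =
    rho `^ (1 - q / 2) * (rho `^ (2 / q - 1) + 1) `^ (q / 2) * kappa `^ (q / 2) * c.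
  rewrite (powRM _ (mulr_ge0 P0 tau0) (sqrtr_ge0 _)) (powRM _ P0 tau0).
  rewrite sqrt_powR ?addr_ge0 ?sqr_ge0 // P_pow sparsity_factor_powR ?ltW //.
  by rewrite tau_sqr [1 + rho `^ _]addrC; ring.
have Q_pow_lt1 : cone_ratio P tau `^ q < 1.
  rewrite Qq; apply: le_lt_trans (_ : _ <= _ * kappa `^ q * c) _.
    apply: ler_wpM2r => //; apply: ler_wpM2l; first by rewrite mulr_ge0 ?powR_ge0.
    by apply: ler_powR => //; lra.
  by rewrite /c mulrA ltr_pdivrMr ?subr_gt0 // mul1r.
rewrite ltNge; apply: contraTN Q_pow_lt1 => Q_ge1; rewrite -leNgt.
have := ge0_ler_powR (ltW q0) _ _ Q_ge1; rewrite powR1 /=; apply; rewrite nnegrE //.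
by rewrite cone_ratio_ge0 ?mulr_ge0 ?sqrtr_ge0 ?powR_ge0.
Qed.

Lemma tail_const_powR (s a q E : R) : 0 < s -> 0 < a -> 0 < q -> 0 <= E ->
  (2 * a `^ (q / 2 - 1) * E) `^ q^-1 =
    2 `^ q^-1 * sparsity_factor (s / a) q * E `^ q^-1 / s `^ (q^-1 - 2^-1).
Proof.
move=> s0 a0 q0 E0.
have two0 : (0 : R) <= 2 by rewrite ler0n.
have ae0 : 0 <= a `^ (q / 2 - 1) by apply: powR_ge0.
rewrite (powRM _ (mulr_ge0 two0 ae0) E0) (powRM _ two0 ae0) -powRrM.
rewrite /sparsity_factor (powRM _ (ltW s0) (_ : 0 <= a^-1)); last first.
  by rewrite invr_ge0 ltW.
rewrite -(powR_inv1 (ltW a0)) -powRrM.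
have -> : (q / 2 - 1) * q^-1 = -1 * (q^-1 - 2^-1) by field; rewrite gt_eqF.
by field; rewrite gt_eqF // powR_gt0.
Qed.

Lemma recovery_const_gt0 (da dsa rho q L kappa : R) : 0 < rho -> 0 < q -> 0 < L ->
  cone_ratio (cond_rip_factor kappa da dsa q) (sparsity_factor rho q) < 1 ->
  0 < recovery_const da dsa rho q L kappa.
Proof.
move=> rho0 q0 L0 Q1; apply: divr_gt0; last by rewrite sqrtr_gt0.
apply: mulr_gt0; last exact: powR_gt0.
apply: mulr_gt0; last by apply: powR_gt0; rewrite ltr0n.
by apply: nsp_const_gt0; rewrite ?mulr_ge0 ?sqrtr_ge0 ?powR_ge0.
Qed.

End Constants.

Section NullSpaceProperty.
Variables (R : realType) (q : R) (m n d : nat) (A : 'M[R]_(m, n)) (D : 'M[R]_(n, d)).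
Variables (L U : R) (s a : nat) (da dsa : R).
Hypotheses (q0 : 0 < q) (q1 : q <= 1) (frameD : is_frame D L U) (a0 : (0 < a)%N).
Hypotheses (RIPa : RIP A (dagger D) q a da) (RIPsa : RIP A (dagger D) q (s + a) dsa).

Let sqrtL_inv_ge0 : 0 <= (Num.sqrt L)^-1.
Proof. by rewrite invr_ge0 sqrtr_ge0. Qed.

Section Partition.
Variables (h : 'cV[R]_n) (S T : {set 'I_d}).
Hypotheses (Ah : A *m h = 0) (Scard : (#|S| <= s)%N) (TS : T \subset ~: S).
Hypothesis Tcard : #|T| = minn a #|~: S|.
Hypothesis Tmax : forall i j, i \in T -> j \in ~: S :\: T ->
  `|(D^T *m h) j ord0| <= `|(D^T *m h) i ord0|.

Let x := D^T *m h.
Let head := S :|: T.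
Let tail := ~: S :\: T.
Let tail_mass := \sum_(i in ~: S) `|x i ord0| `^ q.

Lemma tail_le (F : 'cV[R]_d -> R) K : 0 <= K ->
  (forall u v, F (u + v) <= F u + F v) ->
  (forall T' : {set 'I_d}, (#|T'| <= a)%N ->
     F (restr T' x) <= K * l2norm (restr T' x) `^ q) ->
  F (restr tail x) <= K * a%:R `^ (q / 2 - 1) * tail_mass.
Proof.
move=> K0 FD_le F_sparse; rewrite /tail_mass (big_setID T) /= (finset.setIidPr TS).
apply: block_decomposition_le => // [|j jtail].
  by rewrite sumr_ge0 // => i _; apply: powR_ge0.
rewrite -(card_top_subset TS Tcard jtail).
by apply: card_mul_powR_le_sum => [|i iT]; [apply: ltW | apply: Tmax].
Qed.

Lemma l2norm_tail_le : l2norm (restr tail x) `^ q <= a%:R `^ (q / 2 - 1) * tail_mass.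
Proof.
rewrite -[a%:R `^ _]mul1r.
apply: (@tail_le (fun v => l2norm v `^ q)) => [//|u v|T' _]; last by rewrite mul1r.
apply: le_trans (powRD_le (l2norm_ge0 _) (l2norm_ge0 _) q0 q1).
by rewrite ler_powR2r ?addr_ge0 ?l2norm_ge0 ?l2normD_le.
Qed.

Lemma dagger_head_le :
  (1 - dsa) * l2norm (dagger D *m restr head x) `^ q <=
    (1 + da) * (Num.sqrt L)^-1 `^ q * (a%:R `^ (q / 2 - 1) * tail_mass).
Proof.
have [[/andP [da0 _] RIPa_bound] [_ RIPsa_bound]] := (RIPa, RIPsa).
have head_card : (#|head| <= s + a)%N.
  by rewrite (leq_trans (leq_card_setU _ _)) // leq_add // Tcard geq_minl.
apply: le_trans (RIPsa_bound _ (sparse_restr x head_card)).1 _.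
have split_x : x = restr head x + restr tail x.
  by rewrite {1}(restr_setC head x) /head /tail finset.setCU -finset.setDE.
have -> : A *m (dagger D *m restr head x) = - (A *m (dagger D *m restr tail x)).
  apply/eqP; rewrite -addr_eq0 -!mulmxDr -split_x (dagger_trmx frameD).
  by rewrite Ah.
rewrite lqnormqN mulrA.
apply: (@tail_le (fun v => lqnormq q (A *m (dagger D *m v)))) => [|u v|T' T'a].
- by rewrite mulr_ge0 ?powR_ge0 // addr_ge0.
- by rewrite !mulmxDr lqnormqD_le.
apply: le_trans (RIPa_bound _ (sparse_restr x T'a)).2 _.
rewrite -mulrA ler_wpM2l ?addr_ge0 // -powRM ?l2norm_ge0 //.
rewrite ler_powR2r ?mulr_ge0 ?l2norm_ge0 // ler_pdivlMl ?sqrtr_gt0 //.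
  exact: l2norm_dagger_le frameD _.
by case: frameD.
Qed.

Let tail_bound := (a%:R `^ (q / 2 - 1) * tail_mass) `^ q^-1.
Lemma tail_mass_ge0 : 0 <= tail_mass.
Proof. by rewrite sumr_ge0 // => i _; apply: powR_ge0. Qed.

Lemma tail_bound_powR : tail_bound `^ q = a%:R `^ (q / 2 - 1) * tail_mass.
Proof. by rewrite powRVK ?gt_eqF // mulr_ge0 ?powR_ge0 ?tail_mass_ge0. Qed.

Lemma l2norm_head_tail :
  l2norm x ^+ 2 = l2norm (restr head x) ^+ 2 + l2norm (restr tail x) ^+ 2.
Proof.
rewrite -{1}(restrT x) !l2norm_restr_sqr (big_setID head) /=.
by rewrite finset.setTI finset.setTD /head /tail finset.setCU -finset.setDE.
Qed.

Lemma l2norm_sqr_le_head_tail :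
  l2norm x ^+ 2 <= l2norm (restr head x) ^+ 2 + tail_bound ^+ 2.
Proof.
rewrite l2norm_head_tail lerD2l ler_sqr ?nnegrE ?l2norm_ge0 ?powR_ge0 //.
by rewrite -(ler_powR2r q0) ?l2norm_ge0 ?powR_ge0 // tail_bound_powR l2norm_tail_le.
Qed.

Lemma l2norm_head_sqr_le :
  l2norm (restr head x) ^+ 2 <= cond_rip_factor (U / L) da dsa q * tail_bound * l2norm x.
Proof.
have [L0 [LU _]] := frameD; have [/andP [_ dsa1] _] := RIPsa.
have U0 : 0 <= U by apply: le_trans (ltW L0) LU.
have [/andP [da0 _] _] := RIPa.
set c := (1 + da) / (1 - dsa).
have c0 : 0 <= c by apply: divr_ge0; [rewrite addr_ge0 | rewrite subr_ge0 ltW].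
rewrite l2norm_restr_sqr -vdot_restr.
apply: le_trans (vdot_analysis_le frameD h (restr head x)) _.
rewrite ler_wpM2r ?l2norm_ge0 // /cond_rip_factor (sqrtrM _ U0) (sqrtrV (ltW L0)).
rewrite -!mulrA ler_wpM2l ?sqrtr_ge0 // -(ler_powR2r q0) ?l2norm_ge0 //;
  last by rewrite !mulr_ge0 ?powR_ge0.
rewrite (powRM _ sqrtL_inv_ge0 (mulr_ge0 (powR_ge0 _ _) (powR_ge0 _ _))).
rewrite (powRM _ (powR_ge0 _ _) (powR_ge0 _ _)) powRVK ?gt_eqF // tail_bound_powR -/c.
rewrite -(ler_pM2l (_ : 0 < 1 - dsa)) ?subr_gt0 //; apply: le_trans dagger_head_le _.
suff -> : (1 - dsa) * ((Num.sqrt L)^-1 `^ q * (c * (a%:R `^ (q / 2 - 1) * tail_mass))) =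
  (1 + da) * (Num.sqrt L)^-1 `^ q * (a%:R `^ (q / 2 - 1) * tail_mass) by [].
by rewrite /c; field; rewrite subr_eq0 gt_eqF.
Qed.

Lemma sum_powR_S_le :
  \sum_(i in S) `|x i ord0| `^ q <= s%:R `^ (1 - q / 2) * l2norm (restr head x) `^ q.
Proof.
have q2_gt0 : 0 < q / 2 by rewrite divr_gt0.
have q2_lt1 : q / 2 < 1.
  by rewrite ltr_pdivrMr //; apply: le_lt_trans q1 _; rewrite mul1r ltr1n.
under eq_bigr => i _ do rewrite -powR_sqr_half.
apply: le_trans (sum_powR_le _ (fun i => sqr_ge0 _) q2_gt0 q2_lt1) _.
apply: ler_pM; rewrite ?powR_ge0 //.
  by rewrite ler_powR2r ?ler0n // ?ler_nat // subr_gt0.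
rewrite -[l2norm _]ger0_norm ?l2norm_ge0 // -powR_sqr_half l2norm_restr_sqr.
rewrite ler_powR2r ?sumr_ge0 // => [|i _|i _]; rewrite ?sqr_ge0 //.
rewrite /head [X in _ <= X](big_setID S) /= (finset.setIidPr (finset.subsetUl S T)).
rewrite lerDl.
by rewrite sumr_ge0 // => i _; apply: sqr_ge0.
Qed.

Lemma tail_bound_powR_le E :
  \sum_(i in ~: S) `|x i ord0| `^ q <= \sum_(i in S) `|x i ord0| `^ q + 2 * E ->
  tail_bound `^ q <= (sparsity_factor (s%:R / a%:R) q * l2norm (restr head x)) `^ q +
            2 * a%:R `^ (q / 2 - 1) * E.
Proof.
move=> cone; have ar : (0 : R) < a%:R by rewrite ltr0n.
have ae0 : 0 <= a%:R `^ (q / 2 - 1) by apply: powR_ge0.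
rewrite tail_bound_powR powRM ?powR_ge0 ?l2norm_ge0 // sparsity_factor_powR ?divr_ge0 //.
rewrite powRM ?invr_ge0 ?ler0n // -(powR_inv1 (ltW ar)) -powRrM.
have -> : -1 * (1 - q / 2) = q / 2 - 1 by ring.
have tail_mass_le : tail_mass <= s%:R `^ (1 - q / 2) * l2norm (restr head x) `^ q + 2 * E.
  by apply: le_trans cone _; rewrite lerD2r sum_powR_S_le.
have := ler_wpM2l ae0 tail_mass_le; lra.
Qed.

End Partition.

Lemma l2norm_analysis_ker_le (h : 'cV[R]_n) (S : {set 'I_d}) E :
  A *m h = 0 -> (#|S| <= s)%N -> 0 <= E ->
  cone_ratio (cond_rip_factor (U / L) da dsa q) (sparsity_factor (s%:R / a%:R) q) < 1 ->
  \sum_(i in ~: S) `|(D^T *m h) i ord0| `^ q <=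
    \sum_(i in S) `|(D^T *m h) i ord0| `^ q + 2 * E ->
  l2norm (D^T *m h) <= nsp_const (cond_rip_factor (U / L) da dsa q)
    (sparsity_factor (s%:R / a%:R) q) q * (2 * a%:R `^ (q / 2 - 1) * E) `^ q^-1.
Proof.
move=> Ah Scard E0 Q1 cone.
have [T [TS Tcard Tmax]] := exists_top_subset (D^T *m h) (~: S) a.
have N_sqr := l2norm_sqr_le_head_tail TS Tcard Tmax.
have X_sqr := l2norm_head_sqr_le Ah Scard TS Tcard Tmax.
have tail_pow := tail_bound_powR_le T Scard cone.
have G_pow : (2 * a%:R `^ (q / 2 - 1) * E) `^ q^-1 `^ q = 2 * a%:R `^ (q / 2 - 1) * E.
  by rewrite powRVK ?gt_eqF // !mulr_ge0 ?powR_ge0 ?ler0n.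
rewrite -G_pow in tail_pow.
apply: head_tail_bound N_sqr X_sqr tail_pow; rewrite ?l2norm_ge0 ?powR_ge0 //.
by rewrite mulr_ge0 ?sqrtr_ge0 ?powR_ge0.
Qed.

Lemma l2norm_ker_le (h : 'cV[R]_n) (S : {set 'I_d}) E :
  (0 < s)%N -> A *m h = 0 -> (#|S| <= s)%N -> 0 <= E ->
  cone_ratio (cond_rip_factor (U / L) da dsa q) (sparsity_factor (s%:R / a%:R) q) < 1 ->
  \sum_(i in ~: S) `|(D^T *m h) i ord0| `^ q <=
    \sum_(i in S) `|(D^T *m h) i ord0| `^ q + 2 * E ->
  l2norm h <= recovery_const da dsa (s%:R / a%:R) q L (U / L) * E `^ q^-1
                / s%:R `^ (q^-1 - 2^-1).
Proof.
move=> s0 Ah Scard E0 Q1 cone; have [L0 _] := frameD.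
have := l2norm_analysis_ker_le Ah Scard E0 Q1 cone.
rewrite (@tail_const_powR _ s%:R) ?ltr0n // => Dth_le.
set K := nsp_const _ _ q in Dth_le *; set tau := sparsity_factor _ q in Dth_le *.
have -> : recovery_const da dsa (s%:R / a%:R) q L (U / L) * E `^ q^-1
            / s%:R `^ (q^-1 - 2^-1) =
    K * (2 `^ q^-1 * tau * E `^ q^-1 / s%:R `^ (q^-1 - 2^-1)) / Num.sqrt L.
  rewrite /recovery_const -/K -/tau; field.
  by rewrite ?gt_eqF ?sqrtr_gt0 ?powR_gt0 ?ltr0n.
rewrite ler_pdivlMr ?sqrtr_gt0 // mulrC.
exact: le_trans (frame_lower frameD h) Dth_le.
Qed.

End NullSpaceProperty.

Lemma lqnorm_le (R : realType) n (q : R) (u v : 'cV[R]_n) : 0 < q ->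
  (lqnorm q u <= lqnorm q v) = (lqnormq q u <= lqnormq q v).
Proof. by move=> q0; rewrite ler_powR2r ?lqnormq_ge0 ?divr_gt0. Qed.

Unset Implicit Arguments.

Theorem corollary2p2 (R : realType) :
  exists C1 : R -> R -> R -> R -> R -> R -> R,
  forall (q : R) (m n d : nat) (A : 'M[R]_(m, n)) (D : 'M[R]_(n, d))
         (L U : R) (s a : nat) (da dsa : R),
    0 < q -> q <= 1 ->
    is_frame D L U ->
    (0 < s)%N -> (s < a)%N ->
    RIP_const A (dagger D) q a da ->
    RIP_const A (dagger D) q (s + a) dsa ->
    let rho := s%:R / a%:R in
    let kappa := U / L in
    rho `^ (1 - q / 2) * (rho `^ (2 / q - 1) + 1) `^ (q / 2)
      * kappa `^ q * (1 + da) < 1 - dsa ->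
    0 < C1 da dsa rho q L kappa /\
    forall (f fhat : 'cV[R]_n),
      A *m fhat = A *m f ->
      (forall g : 'cV[R]_n, A *m g = A *m f ->
         lqnorm q (D^T *m fhat) <= lqnorm q (D^T *m g)) ->
      forall xs : 'cV[R]_d, best_s_term s (D^T *m f) xs ->
      l2norm (fhat - f) <=
        C1 da dsa rho q L kappa * lqnorm q (D^T *m f - xs)
          / (s%:R `^ (1 / q - 1 / 2)).
Proof.
exists (@recovery_const R).
move=> q m n d A D L U s a da dsa q0 q1 frameD s0 sa [RIPa _] [RIPsa _] rho kappa H.
have [[/andP [da0 _] _] [/andP [_ dsa1] _]] := (RIPa, RIPsa).
have [L0 [LU _]] := frameD.
have a0 : (0 < a)%N := ltn_trans s0 sa.
have rho0 : 0 < rho by rewrite divr_gt0 ?ltr0n.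
have kappa1 : 1 <= kappa by rewrite ler_pdivlMr // mul1r.
have Q1 := cone_ratio_lt1 q0 rho0 kappa1 da0 dsa1 H.
split; first exact: recovery_const_gt0.
move=> f fhat Afhat fhat_min _ [S [Scard [_ ->]]].
set z := D^T *m f; set h := fhat - f.
have Ah : A *m h = 0 by rewrite mulmxBr Afhat subrr.
have Dfhat : D^T *m fhat = z + D^T *m h by rewrite /h mulmxBr addrC subrK.
have cone : lqnormq q (z + D^T *m h) <= lqnormq q z.
  by have := fhat_min f erefl; rewrite Dfhat lqnorm_le.
rewrite subr_restr /lqnorm lqnormq_restr ?gt_eqF // !div1r.
apply: (l2norm_ker_le q0 q1 frameD a0 RIPa RIPsa s0 Ah _ _ Q1
  (cone_constraint S q0 q1 cone)).
  by rewrite Scard geq_minl.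
by rewrite sumr_ge0 // => i _; apply: powR_ge0.
Qed.
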